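(* Let $n>4$ and let $\mathcal{L}\subseteq\mathcal{L}_n$ be a linear subspace that is a Jordan algebra, is invariant under the conjugation action of $S_n$, contains $J$, and contains $W_n:=\{Q=(q_{ij})\in\mathcal{L}_n: Q=Q^T,\ q_{ii}=0\ \forall i\}$ (the submodule isomorphic to $\{n-2,2\}$). Then $\mathrm{Symm}_n\subseteq\mathcal{L}$.
   Context: $\mathbf{1}\in\mathbb{R}^n$ is the all-ones column vector; $\mathcal{L}_n=\{Q\in \mathrm{Mat}_n(\mathbb{R}): Q\mathbf{1}=0\}$; $J:=\frac1n\mathbf{1}\mathbf{1}^T-I_n$. $\mathrm{Symm}_n$ is the space of symmetric matrices in $\mathcal{L}_n$. For $\sigma\in S_n$, $K_\sigma$ is the permutation matrix with $e_iK_\sigma=e_{\sigma(i)}$, and $S_n$ acts by $\sigma\cdot X=K_\sigma^TXK_\sigma$. A Jordan algebra is a subspace closed under $AB+BA$. *)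

From HB Require Import structures.
From mathcomp Require Import all_boot all_order all_algebra all_fingroup.
From mathcomp Require Import reals.
Set Implicit Arguments. Unset Strict Implicit. Unset Printing Implicit Defensive.
Import Order.TTheory GRing.Theory Num.Theory.
Local Open Scope ring_scope.

Definition ones (R : nzRingType) (n : nat) : 'cV[R]_n := const_mx 1.

Definition in_Ln (R : nzRingType) (n : nat) (Q : 'M[R]_n) : Prop :=
  Q *m ones R n = 0.

Definition Jmat (R : fieldType) (n : nat) : 'M[R]_n :=
  (n%:R)^-1 *: (ones R n *m (ones R n)^T) - 1%:M.

Definition in_Symm (R : nzRingType) (n : nat) (Q : 'M[R]_n) : Prop :=
  Q^T = Q /\ in_Ln Q.

Definition in_W (R : nzRingType) (n : nat) (Q : 'M[R]_n) : Prop :=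
  in_Symm Q /\ forall i, Q i i = 0.

(* permutation matrix K_sigma with e_i K_sigma = e_{sigma(i)} *)
Definition Kmat (R : nzRingType) (n : nat) (s : 'S_n) : 'M[R]_n := perm_mx s.

Definition perm_act (R : nzRingType) (n : nat) (s : 'S_n) (X : 'M[R]_n) : 'M[R]_n :=
  (Kmat R s)^T *m X *m Kmat R s.

Definition is_subspace (R : nzRingType) (n : nat) (L : 'M[R]_n -> Prop) : Prop :=
  L 0 /\ forall (a : R) A B, L A -> L B -> L (a *: A + B).

Definition is_jordan (R : nzRingType) (n : nat) (L : 'M[R]_n -> Prop) : Prop :=
  forall A B, L A -> L B -> L (A *m B + B *m A).

Definition Sn_invariant (R : nzRingType) (n : nat) (L : 'M[R]_n -> Prop) : Prop :=
  forall (s : 'S_n) A, L A -> L (perm_act s A).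

From HB Require Import structures.
From mathcomp Require Import all_boot all_order all_algebra all_fingroup.
From mathcomp Require Import reals.
From mathcomp Require Import ring.
Set Implicit Arguments. Unset Strict Implicit. Unset Printing Implicit Defensive.
Import Order.TTheory GRing.Theory Num.Theory.
Local Open Scope ring_scope.

(* A matrix Q of Symm_n splits as
     Q = (Q - \sum_a q_aa F_a) + \sum_a q_aa F_a,
   where each F_a is a symmetric matrix of L whose diagonal is the unit
   vector e_a.  The first summand is symmetric, lies in L_n (because Q and
   every element of L do) and has zero diagonal, hence lies in W_n, which
   is contained in L; so Q lies in L.
   The matrices F_a are produced from W_n with the Jordan product: for
   pairwise distinct i, j, k, l and u = e_i - e_j, w = e_k - e_l, the
   matrix A = u w^T + w u^T lies in W_n and A A + A A = 4 (u u^T + w w^T).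
   This "edge Gram matrix" D(i,j,k,l) is symmetric with diagonal
   e_i + e_j + e_k + e_l.  Given five distinct indices i0, ..., i4 (this is
   where n > 4 is used), one quarter of the sum of the five D's over the
   4-subsets, minus D(i1,i2,i3,i4), has diagonal e_i0; conjugating it by the
   transposition (i0 a) gives F_a. *)

Section SubspaceClosure.
Variables (R : nzRingType) (n : nat) (L : 'M[R]_n -> Prop).
Hypothesis subL : is_subspace L.

Lemma subspaceZ a A : L A -> L (a *: A).
Proof. by case: subL => L0 Lc LA; rewrite -[_ *: _]addr0; apply: Lc. Qed.

Lemma subspaceD A B : L A -> L B -> L (A + B).
Proof. by case: subL => _ Lc LA LB; rewrite -[A]scale1r; apply: Lc. Qed.

Lemma subspaceB A B : L A -> L B -> L (A - B).
Proof. by case: subL => _ Lc LA LB; rewrite addrC -scaleN1r; apply: Lc. Qed.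

Lemma subspace_sum (I : finType) (F : I -> 'M[R]_n) :
  (forall i, L (F i)) -> L (\sum_i F i).
Proof. by case: subL => L0 _ LF; apply: big_ind => //; apply: subspaceD. Qed.

End SubspaceClosure.

Section EdgeVectors.
Context {R : comNzRingType} {n : nat}.

Definition edge_vec (i j : 'I_n) : 'cV[R]_n := delta_mx i 0 - delta_mx j 0.

Definition edge_sym (i j k l : 'I_n) : 'M[R]_n :=
  edge_vec i j *m (edge_vec k l)^T + edge_vec k l *m (edge_vec i j)^T.

Definition edge_gram (i j k l : 'I_n) : 'M[R]_n :=
  edge_vec i j *m (edge_vec i j)^T + edge_vec k l *m (edge_vec k l)^T.

Lemma edge_vec_tr i j : (edge_vec i j)^T = delta_mx 0 i - delta_mx 0 j.
Proof. by rewrite /edge_vec linearB /= !trmx_delta. Qed.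

Lemma edge_vecE i j x : edge_vec i j x 0 = (x == i)%:R - (x == j)%:R.
Proof. by rewrite !mxE !andbT. Qed.

Lemma edge_vec_ones i j : (edge_vec i j)^T *m ones R n = 0.
Proof. by rewrite edge_vec_tr mulmxBl -!rowE /ones !row_const subrr. Qed.

Lemma delta_mx1 : delta_mx (0 : 'I_1) (0 : 'I_1) = 1%:M :> 'M[R]_1.
Proof. by apply/matrixP => a b; rewrite !ord1 !mxE. Qed.

Lemma edge_vec_norm i j : i != j -> (edge_vec i j)^T *m edge_vec i j = 2%:M.
Proof.
move=> ij; rewrite edge_vec_tr /edge_vec mulmxBl !mulmxBr !mul_delta_mx_cond.
rewrite !eqxx (negbTE ij) eq_sym (negbTE ij) delta_mx1 /= !mulr0n subr0.
by rewrite sub0r opprK !mulr1n -raddfD.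
Qed.

Lemma edge_vec_orth i j k l : i != k -> i != l -> j != k -> j != l ->
  (edge_vec i j)^T *m edge_vec k l = 0.
Proof.
move=> ik il jk jl; rewrite edge_vec_tr /edge_vec mulmxBl !mulmxBr.
rewrite !mul_delta_mx_cond (negbTE ik) (negbTE il) (negbTE jk) (negbTE jl).
by rewrite !mulr0n !subrr.
Qed.

Lemma jordan_square_sym_outer (u w : 'cV[R]_n) :
  w^T *m u = 0 -> u^T *m w = 0 -> u^T *m u = 2%:M -> w^T *m w = 2%:M ->
  let A := u *m w^T + w *m u^T in
  A *m A + A *m A = 4%:R *: (u *m u^T + w *m w^T).
Proof.
move=> wu uw uu ww A; rewrite /A !mulmxDl !mulmxDr !mulmxA.
rewrite -[u *m _ *m u]mulmxA -[u *m _ *m w]mulmxA.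
rewrite -[w *m _ *m u]mulmxA -[w *m _ *m w]mulmxA.
rewrite uw wu uu ww !mulmx0 !mul0mx !mul_mx_scalar !add0r !addr0.
by rewrite -!scalemxAl -!scalerDr -mulr2n -scaler_nat scalerA -natrM.
Qed.

Lemma edge_sym_W i j k l : i != k -> i != l -> j != k -> j != l ->
  in_W (edge_sym i j k l).
Proof.
move=> ik il jk jl; split; [split|].
- by rewrite /edge_sym linearD /= !trmx_mul !trmxK addrC.
- by rewrite /in_Ln mulmxDl -!mulmxA !edge_vec_ones !mulmx0 addr0.
- move=> x; rewrite !mxE !big_ord1 !edge_vecE !mxE !eqxx !andbT.
  have [->|xi] := eqVneq x i.
    by rewrite (negbTE ik) (negbTE il) subrr mulr0 mul0r addr0.
  have [->|xj] := eqVneq x j.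
    by rewrite (negbTE jk) (negbTE jl) subrr mulr0 mul0r addr0.
  by rewrite subrr mul0r mulr0 addr0.
Qed.

Lemma edge_sym_square i j k l : i != j -> k != l ->
  i != k -> i != l -> j != k -> j != l ->
  let A := edge_sym i j k l in A *m A + A *m A = 4%:R *: edge_gram i j k l.
Proof.
move=> ij kl ik il jk jl; apply: jordan_square_sym_outer.
- by rewrite edge_vec_orth // eq_sym.
- exact: edge_vec_orth.
- exact: edge_vec_norm.
- exact: edge_vec_norm.
Qed.

Lemma edge_gram_sym i j k l : (edge_gram i j k l)^T = edge_gram i j k l.
Proof. by rewrite /edge_gram linearD /= !trmx_mul !trmxK. Qed.

Lemma edge_gram_diag i j k l x : i != j -> k != l ->
  edge_gram i j k l x x =
  (x == i)%:R + (x == j)%:R + (x == k)%:R + (x == l)%:R.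
Proof.
move=> ij kl; rewrite !mxE !big_ord1 !edge_vecE !mxE !eqxx !andbT.
have sq a b : a != b ->
    ((x == a)%:R - (x == b)%:R) * ((x == a)%:R - (x == b)%:R)
    = (x == a)%:R + (x == b)%:R :> R.
  move=> ab; have [->|xa] := eqVneq x a.
    by rewrite (negbTE ab) subr0 mulr1 addr0.
  have [_|xb] := eqVneq x b; first by rewrite sub0r mulrNN mulr1 add0r.
  by rewrite subrr mulr0 addr0.
by rewrite (sq _ _ ij) (sq _ _ kl) addrA.
Qed.

End EdgeVectors.

Section PermAction.
Variables (R : comNzRingType) (n : nat).

Lemma perm_actE (s : 'S_n) (X : 'M[R]_n) x y :
  perm_act s X x y = X (s^-1 x)%g (s^-1 y)%g.
Proof.
have -> : perm_act s X = row_perm s^-1 (col_perm s^-1 X).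
  by rewrite /perm_act /Kmat row_permE col_permE invgK tr_perm_mx mulmxA.
by rewrite !mxE.
Qed.

Lemma perm_act_tr (s : 'S_n) (X : 'M[R]_n) :
  (perm_act s X)^T = perm_act s X^T.
Proof. by rewrite /perm_act !trmx_mul trmxK mulmxA. Qed.

End PermAction.

Section DiagonalUnits.
Context {R : numFieldType} {n : nat}.

(* The combination (A + B + C + D + E) / 4 - E; it is only ever applied to
   edge Gram matrices, but its entries and transpose are computed for
   arbitrary matrices to keep the definition of edge_gram folded. *)
Definition quarter_comb (A B C D E : 'M[R]_n) : 'M[R]_n :=
  4%:R^-1 *: (A + B + C + D + E) - E.

Definition unit_diag_mx (i0 i1 i2 i3 i4 : 'I_n) : 'M[R]_n :=
  quarter_comb (edge_gram i0 i1 i2 i3) (edge_gram i0 i1 i2 i4)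
    (edge_gram i0 i1 i3 i4) (edge_gram i0 i2 i3 i4) (edge_gram i1 i2 i3 i4).

Definition diag_unit (i0 i1 i2 i3 i4 a : 'I_n) : 'M[R]_n :=
  perm_act (tperm i0 a) (unit_diag_mx i0 i1 i2 i3 i4).

Lemma quarter_comb_entry (A B C D E : 'M[R]_n) x y :
  quarter_comb A B C D E x y
  = 4%:R^-1 * (A x y + B x y + C x y + D x y + E x y) - E x y.
Proof. by rewrite !mxE. Qed.

Lemma quarter_comb_tr (A B C D E : 'M[R]_n) :
  (quarter_comb A B C D E)^T = quarter_comb A^T B^T C^T D^T E^T.
Proof. by rewrite /quarter_comb linearB linearZ /= !linearD. Qed.

Lemma unit_diag_mx_diag (i0 i1 i2 i3 i4 : 'I_n) x :
  uniq [:: i0; i1; i2; i3; i4] ->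
  unit_diag_mx i0 i1 i2 i3 i4 x x = (x == i0)%:R.
Proof.
rewrite /= !inE !negb_or !andbT.
case/and4P=> /and4P[d01 d02 d03 d04] /and3P[d12 d13 d14] /andP[d23 d24] d34.
by rewrite /unit_diag_mx quarter_comb_entry !edge_gram_diag //; field.
Qed.

Lemma unit_diag_mx_sym (i0 i1 i2 i3 i4 : 'I_n) :
  (unit_diag_mx i0 i1 i2 i3 i4)^T = unit_diag_mx i0 i1 i2 i3 i4.
Proof. by rewrite /unit_diag_mx quarter_comb_tr !edge_gram_sym. Qed.

Lemma diag_unit_sym (i0 i1 i2 i3 i4 a : 'I_n) :
  (diag_unit i0 i1 i2 i3 i4 a)^T = diag_unit i0 i1 i2 i3 i4 a.
Proof. by rewrite /diag_unit perm_act_tr unit_diag_mx_sym. Qed.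

Lemma diag_unit_diag (i0 i1 i2 i3 i4 a x : 'I_n) :
  uniq [:: i0; i1; i2; i3; i4] ->
  diag_unit i0 i1 i2 i3 i4 a x x = (x == a)%:R.
Proof.
move=> uq; rewrite /diag_unit perm_actE tpermV unit_diag_mx_diag //.
by rewrite -[X in _ == X](tpermR i0 a) (inj_eq perm_inj).
Qed.

Variable L : 'M[R]_n -> Prop.
Hypotheses (subL : is_subspace L) (jordL : is_jordan L)
  (permL : Sn_invariant L) (WL : forall Q, in_W Q -> L Q).

(* The Jordan square of edge_sym lies in L, hence so does edge_gram. *)
Lemma edge_gram_in_L (i j k l : 'I_n) : i != j -> k != l ->
  i != k -> i != l -> j != k -> j != l -> L (edge_gram i j k l).
Proof.
move=> ij kl ik il jk jl; have Wsym := WL (edge_sym_W ik il jk jl).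
have := jordL Wsym Wsym; rewrite edge_sym_square // => /(subspaceZ subL 4%:R^-1).
by rewrite scalerA mulVf ?scale1r // pnatr_eq0.
Qed.

Lemma diag_unit_in_L (i0 i1 i2 i3 i4 a : 'I_n) :
  uniq [:: i0; i1; i2; i3; i4] -> L (diag_unit i0 i1 i2 i3 i4 a).
Proof.
rewrite /= !inE !negb_or !andbT.
case/and4P=> /and4P[d01 d02 d03 d04] /and3P[d12 d13 d14] /andP[d23 d24] d34.
apply: permL; rewrite /unit_diag_mx /quarter_comb.
apply: subspaceB => //; last exact: edge_gram_in_L.
apply: subspaceZ => //.
by do 4![apply: subspaceD => //; last exact: edge_gram_in_L]; apply: edge_gram_in_L.
Qed.

End DiagonalUnits.

Section Splitting.
Variables (R : nzRingType) (n : nat) (L : 'M[R]_n -> Prop).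
Hypotheses (subL : is_subspace L) (LLn : forall Q, L Q -> in_Ln Q)
  (WL : forall Q, in_W Q -> L Q).

Lemma symm_in_L (F : 'I_n -> 'M[R]_n) :
  (forall a, L (F a)) -> (forall a, (F a)^T = F a) ->
  (forall a x, F a x x = (x == a)%:R) ->
  forall Q, in_Symm Q -> L Q.
Proof.
move=> LF Fsym Fdiag Q [QT QLn].
pose X := \sum_a Q a a *: F a.
have LX : L X by apply: subspace_sum => // a; apply: subspaceZ.
have XT : X^T = X.
  by rewrite /X linear_sum; apply: eq_bigr => a _; rewrite linearZ /= Fsym.
rewrite -(subrK X Q); apply: subspaceD => //; apply: WL; split; [split|].
- by rewrite linearB /= QT XT.
- by rewrite /in_Ln mulmxBl QLn (LLn LX) subrr.
- move=> x; rewrite !mxE summxE (bigD1 x) //= big1 ?addr0.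
    by rewrite mxE Fdiag eqxx mulr1 subrr.
  by move=> a ax; rewrite mxE Fdiag eq_sym (negbTE ax) mulr0.
Qed.

End Splitting.

Theorem mainTheorem15 (R : realType) (n : nat) (L : 'M[R]_n -> Prop) :
  (4 < n)%N ->
  is_subspace L ->
  (forall Q, L Q -> in_Ln Q) ->
  is_jordan L ->
  Sn_invariant L ->
  L (Jmat R n) ->
  (forall Q, in_W Q -> L Q) ->
  forall Q, in_Symm Q -> L Q.
Proof.
move=> n_gt4 subL LLn jordL permL _ WL.
pose i4 := Ordinal n_gt4.
pose i3 := Ordinal (ltn_trans (ltnSn 3) n_gt4).
pose i2 := Ordinal (ltn_trans (ltnSn 2) (ltn_ord i3)).
pose i1 := Ordinal (ltn_trans (ltnSn 1) (ltn_ord i2)).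
pose i0 := Ordinal (ltn_trans (ltnSn 0) (ltn_ord i1)).
have uq : uniq [:: i0; i1; i2; i3; i4] by [].
apply: (symm_in_L subL LLn WL (F := diag_unit i0 i1 i2 i3 i4)) => a.
- exact: (diag_unit_in_L subL jordL permL WL).
- exact: diag_unit_sym.
- by move=> x; apply: diag_unit_diag.
Qed.
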